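(* Let $0<\epsilon\le1/4$ and $0<\delta<1$. Let $\rho,\tilde\rho\in\mathbb{R}^{n\times n}$ be density matrices with $\sum_i|\tilde\rho_{ii}-\rho_{ii}|\le\epsilon/8$. Let $m=137\,\epsilon^{-2}(n\ln2+\ln(1/\delta))$, draw $N\sim\mathrm{Pois}(m)$, measure $N$ independent copies of $\tilde\rho$ in the computational basis, let $N_i$ be the number of outcomes equal to $i$, and set $\hat\rho_{ii}=N_i/m$. Then with probability at least $1-\delta$, $\sum_i|\hat\rho_{ii}-\rho_{ii}|\le\epsilon/4$.
   Context: A density matrix is a psd matrix of trace one; measuring $\tilde\rho$ in the computational basis yields outcome $i$ with probability $\tilde\rho_{ii}$. *)

From HB Require Import structures.
From mathcomp Require Import all_boot all_order all_algebra.
From mathcomp Require Import boolp classical_sets reals ereal topology normedtype sequences exp.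
Set Implicit Arguments. Unset Strict Implicit. Unset Printing Implicit Defensive.
Import Order.TTheory GRing.Theory Num.Theory.
Local Open Scope ring_scope.

Section Defs.
Variable R : realType.

Definition psd (n : nat) (A : 'M[R]_n) : Prop :=
  A^T = A /\ forall x : 'cV[R]_n, 0 <= (x^T *m A *m x) 0 0.

Definition density_matrix (n : nat) (A : 'M[R]_n) : Prop :=
  psd A /\ \tr A = 1.

Definition pois_pmf (m : R) (N : nat) : R := expR (- m) * m ^+ N / (N`!)%:R.

Definition outcome_count (N n : nat) (s : {ffun 'I_N -> 'I_n}) (i : 'I_n) : nat :=
  #|[set k | s k == i]|.

(* probability of an outcome sequence s of N independent computational-basis
   measurements of rhot: each outcome i has probability rhot i i *)
Definition seq_prob (n : nat) (rhot : 'M[R]_n) (N : nat) (s : {ffun 'I_N -> 'I_n}) : R :=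
  \prod_(k < N) rhot (s k) (s k).

Definition good_estimate (n : nat) (rho : 'M[R]_n) (m eps : R) (N : nat)
  (s : {ffun 'I_N -> 'I_n}) : bool :=
  \sum_(i < n) `| (outcome_count s i)%:R / m - rho i i | <= eps / 4.

Definition success_prob (n : nat) (rho rhot : 'M[R]_n) (m eps : R) : \bar R :=
  (\sum_(0 <= N <oo)
     (pois_pmf m N * \sum_(s : {ffun 'I_N -> 'I_n} | good_estimate rho m eps s)
                       seq_prob rhot s)%:E)%E.

End Defs.

From mathcomp Require Import all_boot all_order all_algebra.
From mathcomp Require Import boolp reals ereal normedtype sequences exp.
From mathcomp Require Import ring lra.
Import Order.TTheory GRing.Theory Num.Theory.
Local Open Scope ring_scope.

(* If the estimate fails, the counts N_i deviate from m p_i, where p_i = rhot_ii,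
   by at least m lam in l1 norm, with lam = eps/8.  Bounding the indicator of this
   event by e^(-lam m lam) prod_i (e^(lam d_i) + e^(-lam d_i)), d_i = N_i - m p_i,
   and expanding the product over the 2^n sign vectors sg turns the failure
   probability into a sum of 2^n exponential moments.  Given N the counts are
   multinomial, so the moment for sg is
   prod_i e^(-sg_i lam m p_i) (sum_i p_i e^(sg_i lam))^N,
   and averaging over N ~ Pois(m) replaces the N-th power by
   exp(m (sum_i p_i e^(sg_i lam) - 1)).  Comparing the exponential series with a
   geometric one gives e^x <= 1 + x + x^2/(2 - |x|), so each moment is at most
   exp(m lam^2/(2 - lam) - m lam^2), and the choice of m makes this at most
   delta 2^-n. *)

Lemma leq_exp2_fact k : (2 ^ k <= k.+1`!)%N.
Proof. by elim: k => // k IH; rewrite expnS factS leq_mul. Qed.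

Lemma sum_geometric_le {R : realFieldType} (q : R) K :
  0 <= q < 1 -> \sum_(i < K) q ^+ i <= (1 - q)^-1.
Proof.
case/andP=> q0 q1; have q1' : 0 < 1 - q by rewrite subr_gt0.
rewrite -[_^-1]mul1r ler_pdivlMr // mulrC -opprB mulNr -subrX1 opprB lerBlDr lerDl.
exact: exprn_ge0.
Qed.

Section ExpBounds.
Context {R : realType}.
Implicit Types x : R.

Lemma exp_coeffSS_le x k : exp_coeff x k.+2 <= x ^+ 2 / 2 * (`|x| / 2) ^+ k.
Proof.
have -> : x ^+ 2 / 2 * (`|x| / 2) ^+ k = `|x| ^+ k.+2 / (2 ^ k.+1)%:R.
  rewrite -real_normK ?num_real // natrX !exprS expr_div_n; field.
  by rewrite expf_neq0.
rewrite /exp_coeff /=; apply: (@le_trans _ _ (`|x| ^+ k.+2 / k.+2`!%:R)).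
  by rewrite ler_wpM2r // -normrX ler_norm.
rewrite ler_wpM2l ?exprn_ge0 // lef_pV2 ?posrE ?ltr0n ?expn_gt0 ?fact_gt0 //.
by rewrite ler_nat leq_exp2_fact.
Qed.

Lemma series_exp_coeff_le_quadratic x K : `|x| < 2 ->
  series (exp_coeff x) K.+2 <= 1 + x + x ^+ 2 / (2 - `|x|).
Proof.
move=> x2; have e0 : exp_coeff x 0 = 1 by rewrite /exp_coeff /= divr1.
have e1 : exp_coeff x 1 = x by rewrite /exp_coeff /= divr1.
rewrite /series /= !big_nat_recl // big_mkord e0 e1 addrA lerD2l.
apply: (@le_trans _ _ (\sum_(k < K) x ^+ 2 / 2 * (`|x| / 2) ^+ k)).
  by apply: ler_sum => k _; exact: exp_coeffSS_le.
have -> : x ^+ 2 / (2 - `|x|) = x ^+ 2 / 2 * (1 - `|x| / 2)^-1.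
  by field; rewrite subr_eq0 gt_eqF.
rewrite -mulr_sumr ler_wpM2l ?divr_ge0 ?sqr_ge0 // sum_geometric_le //.
by rewrite divr_ge0 //= ltr_pdivrMr // mul1r.
Qed.

Lemma expR_le_quadratic x : `|x| < 2 -> expR x <= 1 + x + x ^+ 2 / (2 - `|x|).
Proof.
move=> x2; apply: limr_le; first exact: is_cvg_series_exp_coeff.
by exists 2%N => // -[|[|K]] // _; exact: series_exp_coeff_le_quadratic.
Qed.

Lemma series_exp_coeff_le_expR x K : 0 <= x -> series (exp_coeff x) K <= expR x.
Proof.
move=> x0; apply: limr_ge; first exact: is_cvg_series_exp_coeff.
exists K => // k /= Kk; rewrite /series /= (big_cat_nat (leq0n K) Kk) /= lerDl.
by apply: sumr_ge0 => i _; exact: exp_coeff_ge0.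
Qed.

End ExpBounds.

Section Poisson.
Context {R : realType}.
Variable m : R.

Lemma pois_pmf_ge0 N : 0 <= m -> 0 <= pois_pmf m N.
Proof. by move=> m0; rewrite /pois_pmf !mulr_ge0 ?expR_ge0 ?exprn_ge0. Qed.

Lemma pois_pmfE N : pois_pmf m N = expR (- m) * exp_coeff m N.
Proof. by rewrite /pois_pmf /exp_coeff /= mulrA. Qed.

Lemma pois_pmf_nneseries : (\sum_(0 <= N <oo) (pois_pmf m N)%:E)%E = 1%:E.
Proof.
apply: cvg_lim => //; apply: cvg_EFin; first by apply: nearW => K; rewrite sumEFin.
have -> : fine \o (fun K => \sum_(0 <= N < K) (pois_pmf m N)%:E)%E =
          (fun K => expR (- m) * series (exp_coeff m) K).
  apply/funext => K; rewrite /= sumEFin /series /= mulr_sumr.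
  by under eq_bigr do rewrite pois_pmfE.
rewrite -[1](@expRxMexpNx_1 _ m) mulrC; apply: cvgMl_tmp.
exact: is_cvg_series_exp_coeff.
Qed.

Lemma pois_pgf_le (a : R) K : 0 <= m -> 0 <= a ->
  \sum_(N < K) pois_pmf m N * a ^+ N <= expR (m * (a - 1)).
Proof.
move=> m0 a0; rewrite mulrBr mulr1 addrC expRD.
have -> : \sum_(N < K) pois_pmf m N * a ^+ N = expR (- m) * series (exp_coeff (m * a)) K.
  rewrite /series /= big_mkord mulr_sumr; apply: eq_bigr => N _.
  by rewrite pois_pmfE /exp_coeff /= exprMn; ring.
by rewrite ler_wpM2l ?expR_ge0 // series_exp_coeff_le_expR ?mulr_ge0.
Qed.

End Poisson.

Lemma nneseries_compl_ge {R : realType} (f g : nat -> R) (d : R) :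
  (forall N, 0 <= f N) -> (forall N, 0 <= g N) ->
  (\sum_(0 <= N <oo) (f N + g N)%:E)%E = 1%:E ->
  (forall K, \sum_(N < K) g N <= d) ->
  ((1 - d)%:E <= \sum_(0 <= N <oo) (f N)%:E)%E.
Proof.
move=> f_ge0 g_ge0 fg1 g_le.
rewrite (eq_eseriesr (fun N _ => EFinD (f N) (g N))) nneseriesD in fg1; last 2 first.
- by move=> N _ _; rewrite lee_fin.
- by move=> N _ _; rewrite lee_fin.
have g_le_d : (\sum_(0 <= N <oo) (g N)%:E <= d%:E)%E.
  apply: lime_le; first by apply: is_cvg_nneseries => N _ _; rewrite lee_fin.
  by apply: nearW => K; rewrite sumEFin lee_fin big_mkord.
have f_sum_ge0 : (0 <= \sum_(0 <= N <oo) (f N)%:E)%E.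
  by apply: nneseries_ge0 => N _ _; rewrite lee_fin.
have g_sum_ge0 : (0 <= \sum_(0 <= N <oo) (g N)%:E)%E.
  by apply: nneseries_ge0 => N _ _; rewrite lee_fin.
move: fg1 g_le_d f_sum_ge0 g_sum_ge0.
case: (\sum_(0 <= N <oo) (f N)%:E)%E => [a| |];
  case: (\sum_(0 <= N <oo) (g N)%:E)%E => [b| |] //=.
by move=> [ab1]; rewrite !lee_fin => bd _ _; lra.
Qed.

Lemma prod_outcome_count {R : comPzSemiRingType} {N n} (s : {ffun 'I_N -> 'I_n})
    (w : 'I_n -> R) :
  \prod_(k < N) w (s k) = \prod_(i < n) w i ^+ outcome_count s i.
Proof.
rewrite (partition_big s predT) //=; apply: eq_bigr => i _.
rewrite (eq_bigr (fun _ => w i)); last by move=> k /eqP ->.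
by rewrite prodr_const; congr (_ ^+ _); apply: eq_card => k; rewrite inE.
Qed.

Lemma sum_ffun_prod {R : comPzSemiRingType} {I : finType} N (f : I -> R) :
  \sum_(s : {ffun 'I_N -> I}) \prod_(k < N) f (s k) = (\sum_i f i) ^+ N.
Proof. by rewrite -(bigA_distr_bigA (fun _ : 'I_N => f)) prodr_const card_ord. Qed.

Lemma prod_sum_bool {R : comPzSemiRingType} {I : finType} (g : I -> bool -> R) :
  \prod_i (g i true + g i false) = \sum_(sg : {ffun I -> bool}) \prod_i g i (sg i).
Proof. by rewrite -bigA_distr_bigA; apply: eq_bigr => i _; rewrite big_bool. Qed.

Definition signed {R : zmodType} (lam : R) (b : bool) : R := if b then lam else - lam.

Lemma norm_signed {R : numDomainType} (lam : R) b : 0 <= lam -> `|signed lam b| = lam.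
Proof. by case: b => lam0; rewrite /signed ?normrN ger0_norm. Qed.

Lemma expR_l1_le_sum_signs {R : realType} {I : finType} (d : I -> R) (lam : R) :
  0 <= lam -> expR (lam * \sum_i `|d i|) <=
  \sum_(sg : {ffun I -> bool}) \prod_i expR (signed lam (sg i) * d i).
Proof.
move=> lam0; rewrite -(prod_sum_bool (fun i b => expR (signed lam b * d i))).
rewrite mulr_sumr expR_sum; apply: ler_prod => i _.
rewrite expR_ge0 /= /signed; case: (lerP 0 (d i)) => [d0|/ltW d0].
  by rewrite ger0_norm // lerDl expR_ge0.
by rewrite ler0_norm // mulrN -mulNr lerDr expR_ge0.
Qed.
Section MultinomialTail.
Context {R : realType} {n : nat}.
Variable p : 'I_n -> R.
Hypothesis p_ge0 : forall i, 0 <= p i.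

Definition l1_dev (m : R) {N} (s : {ffun 'I_N -> 'I_n}) : R :=
  \sum_(i < n) `|(outcome_count s i)%:R - m * p i|.

Lemma multinomial_centered_mgf N (m : R) (mu : 'I_n -> R) :
  \sum_(s : {ffun 'I_N -> 'I_n})
     \prod_(k < N) p (s k) * \prod_(i < n) expR (mu i * ((outcome_count s i)%:R - m * p i))
  = \prod_(i < n) expR (- (mu i * (m * p i))) * (\sum_(i < n) p i * expR (mu i)) ^+ N.
Proof.
rewrite -sum_ffun_prod mulr_sumr; apply: eq_bigr => s _.
have -> : \prod_(i < n) expR (mu i * ((outcome_count s i)%:R - m * p i)) =
    \prod_(i < n) expR (- (mu i * (m * p i))) * \prod_(k < N) expR (mu (s k)).
  rewrite (prod_outcome_count s (fun i => expR (mu i))) -big_split /=.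
  by apply: eq_bigr => i _; rewrite -expRM_natl -expRD; congr expR; ring.
by rewrite big_split /=; ring.
Qed.

Lemma multinomial_l1_tail_le N (m t lam : R) : 0 <= lam ->
  \sum_(s : {ffun 'I_N -> 'I_n} | t <= l1_dev m s) \prod_(k < N) p (s k) <=
  expR (- (lam * t)) * \sum_(sg : {ffun 'I_n -> bool})
    \prod_(i < n) expR (- (signed lam (sg i) * (m * p i))) *
    (\sum_(i < n) p i * expR (signed lam (sg i))) ^+ N.
Proof.
move=> lam0.
set F := fun s : {ffun 'I_N -> 'I_n} => expR (- (lam * t)) *
  \sum_(sg : {ffun 'I_n -> bool})
     \prod_(i < n) expR (signed lam (sg i) * ((outcome_count s i)%:R - m * p i)).
have F_ge0 s : 0 <= F s.
  rewrite mulr_ge0 ?expR_ge0 ?sumr_ge0 // => sg _.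
  by rewrite prodr_ge0 // => i _; rewrite expR_ge0.
have P_ge0 (s : {ffun 'I_N -> 'I_n}) : 0 <= \prod_(k < N) p (s k) by rewrite prodr_ge0.
have F_ge1 s : t <= l1_dev m s -> 1 <= F s.
  move=> tle; rewrite -(expRxMexpNx_1 (lam * t)) mulrC ler_wpM2l ?expR_ge0 //.
  apply: (le_trans _ (expR_l1_le_sum_signs
    (fun i => (outcome_count s i)%:R - m * p i) _ lam0)).
  by rewrite ler_expR ler_wpM2l.
apply: (@le_trans _ _ (\sum_(s : {ffun 'I_N -> 'I_n}) \prod_(k < N) p (s k) * F s)).
  rewrite [leRHS](bigID (fun s => t <= l1_dev m s)) /= -[leLHS]addr0 lerD //.
    by apply: ler_sum => s /F_ge1; rewrite -{1}[\prod_(k < N) _]mulr1; apply: ler_wpM2l.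
  by rewrite sumr_ge0 // => s _; rewrite mulr_ge0.
under eq_bigr do rewrite mulrCA mulr_sumr.
rewrite -mulr_sumr exchange_big /=.
by under eq_bigr => sg _ do
  rewrite (multinomial_centered_mgf N m (fun i => signed lam (sg i))).
Qed.

Lemma centered_mgf_le (mu : 'I_n -> R) (m lam : R) :
  \sum_(i < n) p i = 1 -> 0 <= m -> lam < 2 -> (forall i, `|mu i| <= lam) ->
  \prod_(i < n) expR (- (mu i * (m * p i))) * expR (m * (\sum_(i < n) p i * expR (mu i) - 1))
  <= expR (m * (lam ^+ 2 / (2 - lam))).
Proof.
move=> psum m0 lam2 mu_le.
have expR_mu_le i : expR (mu i) - 1 - mu i <= lam ^+ 2 / (2 - lam).
  have mu2 : `|mu i| < 2 by apply: le_lt_trans lam2.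
  rewrite lerBlDl lerBlDl addrA; apply: le_trans (expR_le_quadratic _ mu2) _.
  have mu_ge0 := normr_ge0 (mu i).
  rewrite lerD2l -real_normK ?num_real //.
  apply: ler_pM; rewrite ?sqr_ge0 ?invr_ge0 ?subr_ge0 ?(ltW mu2) //.
    by rewrite lerXn2r ?nnegrE ?(le_trans _ (mu_le i)).
  by rewrite lef_pV2 ?posrE ?subr_gt0 // lerB.
rewrite -expR_sum -expRD ler_expR.
have -> : \sum_(i < n) - (mu i * (m * p i)) + m * (\sum_(i < n) p i * expR (mu i) - 1) =
    m * \sum_(i < n) p i * (expR (mu i) - 1 - mu i).
  rewrite mulr_sumr [RHS](eq_bigr (fun i =>
    m * (p i * expR (mu i)) - m * p i - mu i * (m * p i))); last by move=> i _; ring.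
  by rewrite !sumrB sumrN -!mulr_sumr psum mulrBr addrC.
rewrite ler_wpM2l // -[leRHS]mul1r -[X in _ <= X * _]psum mulr_suml.
by apply: ler_sum => i _; rewrite ler_wpM2l.
Qed.

Lemma pois_multinomial_l1_tail_le K (m t lam : R) :
  \sum_(i < n) p i = 1 -> 0 <= m -> 0 <= lam < 2 ->
  \sum_(N < K) pois_pmf m N *
     \sum_(s : {ffun 'I_N -> 'I_n} | t <= l1_dev m s) \prod_(k < N) p (s k)
  <= (2 ^ n)%:R * expR (m * (lam ^+ 2 / (2 - lam)) - lam * t).
Proof.
move=> psum m0 /andP[lam0 lam2].
set A := fun sg : {ffun 'I_n -> bool} => \sum_(i < n) p i * expR (signed lam (sg i)).
set C := fun sg : {ffun 'I_n -> bool} =>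
  \prod_(i < n) expR (- (signed lam (sg i) * (m * p i))).
apply: (@le_trans _ _ (\sum_(N < K) pois_pmf m N *
    (expR (- (lam * t)) * \sum_(sg : {ffun 'I_n -> bool}) C sg * A sg ^+ N))).
  by apply: ler_sum => N _; rewrite ler_wpM2l ?pois_pmf_ge0 ?multinomial_l1_tail_le.
have -> : \sum_(N < K) pois_pmf m N *
    (expR (- (lam * t)) * \sum_(sg : {ffun 'I_n -> bool}) C sg * A sg ^+ N) =
    expR (- (lam * t)) *
    \sum_(sg : {ffun 'I_n -> bool}) C sg * \sum_(N < K) pois_pmf m N * A sg ^+ N.
  under eq_bigr do rewrite mulrCA mulr_sumr.
  rewrite -mulr_sumr exchange_big; congr (_ * _); apply: eq_bigr => sg _.
  by rewrite mulr_sumr; apply: eq_bigr => N _; rewrite mulrCA.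
rewrite expRD mulrA [leRHS]mulrC ler_wpM2l ?expR_ge0 //.
have -> : (2 ^ n)%:R * expR (m * (lam ^+ 2 / (2 - lam))) =
    \sum_(sg : {ffun 'I_n -> bool}) expR (m * (lam ^+ 2 / (2 - lam))).
  by rewrite sumr_const card_ffun card_bool card_ord mulr_natl.
apply: ler_sum => sg _.
have C_ge0 : 0 <= C sg by rewrite prodr_ge0 // => i _; rewrite expR_ge0.
have A_ge0 : 0 <= A sg by rewrite sumr_ge0 // => i _; rewrite mulr_ge0 ?expR_ge0.
apply: le_trans (ler_wpM2l C_ge0 (pois_pgf_le _ _ K m0 A_ge0)) _.
apply: centered_mgf_le => // i.
by rewrite norm_signed.
Qed.

End MultinomialTail.

Section DensityMatrix.
Context {R : realType} {n : nat}.

Lemma psd_diag_ge0 {A : 'M[R]_n} : psd A -> forall i, 0 <= A i i.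
Proof.
move=> [_ A_ge0] i; have := A_ge0 (delta_mx i 0).
by rewrite trmx_delta -rowE -colE !mxE.
Qed.

Lemma seq_prob_ge0 {A : 'M[R]_n} {N} (s : {ffun 'I_N -> 'I_n}) : psd A -> 0 <= seq_prob A s.
Proof. by move=> A_psd; apply: prodr_ge0 => k _; exact: psd_diag_ge0. Qed.

Lemma sum_seq_prob {A : 'M[R]_n} N : \tr A = 1 ->
  \sum_(s : {ffun 'I_N -> 'I_n}) seq_prob A s = 1.
Proof.
move=> trA; have diag_sum : \sum_(i < n) A i i = 1 := trA.
by rewrite /seq_prob (sum_ffun_prod N (fun i => A i i)) diag_sum expr1n.
Qed.

Lemma l1_dev_of_not_good_estimate {rho rhot : 'M[R]_n} {m eps : R} {N}
    {s : {ffun 'I_N -> 'I_n}} :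
  0 < m -> \sum_(i < n) `|rhot i i - rho i i| <= eps / 8 ->
  ~~ good_estimate rho m eps s -> m * (eps / 8) <= l1_dev (fun i => rhot i i) m s.
Proof.
move=> m0 close; rewrite /good_estimate -ltNge => bad.
set c := fun i => (outcome_count s i)%:R / m.
have -> : l1_dev (fun i => rhot i i) m s = m * \sum_(i < n) `|c i - rhot i i|.
  rewrite mulr_sumr; apply: eq_bigr => i _.
  have -> : c i - rhot i i = m^-1 * ((outcome_count s i)%:R - m * rhot i i).
    by rewrite /c; field; rewrite gt_eqF.
  by rewrite normrM gtr0_norm ?invr_gt0 // mulVKf ?gt_eqF.
rewrite ler_wpM2l ?ltW //.
have : \sum_(i < n) `|c i - rho i i| <=
    \sum_(i < n) `|c i - rhot i i| + \sum_(i < n) `|rhot i i - rho i i|.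
  rewrite -big_split; apply: ler_sum => i _.
  by rewrite (_ : c i - rho i i = c i - rhot i i + (rhot i i - rho i i)) ?ler_normD //; ring.
rewrite /c; lra.
Qed.

Lemma pois_not_good_estimate_le (rho rhot : 'M[R]_n) (m eps lam : R) K :
  psd rhot -> \tr rhot = 1 -> 0 < m -> 0 <= lam < 2 ->
  \sum_(i < n) `|rhot i i - rho i i| <= eps / 8 ->
  \sum_(N < K) pois_pmf m N *
    \sum_(s : {ffun 'I_N -> 'I_n} | ~~ good_estimate rho m eps s) seq_prob rhot s
  <= (2 ^ n)%:R * expR (m * (lam ^+ 2 / (2 - lam)) - lam * (m * (eps / 8))).
Proof.
move=> rhot_psd rhot_tr m0 lam_bd close.
apply: (le_trans _ (pois_multinomial_l1_tail_le (fun i => rhot i i) (psd_diag_ge0 rhot_psd)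
  K m (m * (eps / 8)) lam rhot_tr (ltW m0) lam_bd)).
apply: ler_sum => N _; rewrite ler_wpM2l ?pois_pmf_ge0 ?(ltW m0) //.
rewrite [leLHS]big_mkcond [leRHS]big_mkcond; apply: ler_sum => s _.
case: ifP => [/(l1_dev_of_not_good_estimate m0 close) -> //|_].
by case: ifP => _ //; exact: seq_prob_ge0.
Qed.

End DensityMatrix.

Lemma ln_pow2_div_gt0 {R : realType} n (delta : R) :
  0 < delta -> delta < 1 -> 0 < n%:R * ln 2 + ln (1 / delta).
Proof.
move=> delta0 delta1; have ln2 : 0 < ln (2 : R) by rewrite ln_gt0 // ltr1n.
by rewrite ltr_wpDl ?mulr_ge0 ?(ltW ln2) // ln_gt0 // ltr_pdivlMr // mul1r.
Qed.

Lemma sample_size_gt0 {R : realType} n (eps delta : R) :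
  0 < eps -> 0 < delta -> delta < 1 -> 0 < 137 * eps ^- 2 * (n%:R * ln 2 + ln (1 / delta)).
Proof.
by move=> eps0 delta0 delta1; rewrite !mulr_gt0 ?ln_pow2_div_gt0 // invr_gt0 exprn_gt0.
Qed.

(* With lam = eps/8 <= 1/32 the exponent is at most
   -(31/63) m lam^2 = -(31 * 137)/(63 * 64) (n ln 2 + ln (1/delta)),
   and 31 * 137 >= 63 * 64. *)
Lemma sample_size_chernoff_le {R : realType} n (eps delta m : R) :
  0 < eps -> eps <= 1 / 4 -> 0 < delta -> delta < 1 ->
  m = 137 * eps ^- 2 * (n%:R * ln 2 + ln (1 / delta)) ->
  (2 ^ n)%:R * expR (m * ((eps / 8) ^+ 2 / (2 - eps / 8)) - eps / 8 * (m * (eps / 8)))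
  <= delta.
Proof.
move=> eps0 eps_le delta0 delta1 mE.
set L := n%:R * ln 2 + ln (1 / delta) in mE.
have L0 : 0 < L by exact: ln_pow2_div_gt0.
have m_lam : m * (eps / 8) ^+ 2 = 137 / 64 * L by rewrite mE; field; rewrite gt_eqF.
have delta_eq : (2 ^ n)%:R * expR (- L) = delta.
  rewrite expRN expRD expRM_natl !lnK ?posrE ?divr_gt0 // natrX.
  by field; rewrite gt_eqF // expf_neq0.
rewrite -delta_eq ler_pM2l ?ltr0n ?expn_gt0 // ler_expR.
have e1 : eps / 8 * (m * (eps / 8)) = 137 / 64 * L by rewrite -m_lam; ring.
have e2 : m * ((eps / 8) ^+ 2 / (2 - eps / 8)) <= 32 / 63 * (137 / 64 * L).
  rewrite -m_lam [leRHS]mulrCA ler_pM2l ?mE ?sample_size_gt0 // ler_pdivrMr; last by lra.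
  have : 0 <= (eps / 8) ^+ 2 * (1 / 4 - eps) by rewrite mulr_ge0 ?sqr_ge0 ?subr_ge0.
  nra.
rewrite e1; lra.
Qed.

Theorem lemma9 (R : realType) (n : nat) (eps delta : R) (rho rhot : 'M[R]_n) :
  0 < eps -> eps <= 1 / 4 -> 0 < delta -> delta < 1 ->
  density_matrix rho -> density_matrix rhot ->
  \sum_(i < n) `| rhot i i - rho i i | <= eps / 8 ->
  let m := 137 * eps ^- 2 * (n%:R * ln 2 + ln (1 / delta)) in
  ((1 - delta)%:E <= success_prob rho rhot m eps)%E.
Proof.
move=> eps0 eps_le delta0 delta1 _ [rhot_psd rhot_tr] close.
rewrite /is_true; cbv zeta; set m := 137 * _ * _.
have m0 : 0 < m by exact: sample_size_gt0.
have lam_bd : 0 <= eps / 8 < 2 by apply/andP; split; lra.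
have sum_ge0 N (P : pred {ffun 'I_N -> 'I_n}) :
    0 <= pois_pmf m N * \sum_(s | P s) seq_prob rhot s.
  by rewrite mulr_ge0 ?pois_pmf_ge0 ?sumr_ge0 ?(ltW m0) // => s _; exact: seq_prob_ge0.
apply: (nneseries_compl_ge _ (fun N => pois_pmf m N *
    \sum_(s : {ffun 'I_N -> 'I_n} | ~~ good_estimate rho m eps s) seq_prob rhot s))
  => [N|N||K]; rewrite ?sum_ge0 //.
- rewrite -(pois_pmf_nneseries m); apply: eq_eseriesr => N _.
  rewrite -mulrDr (_ : _ + _ = 1) ?mulr1 // -(sum_seq_prob N rhot_tr).
  by rewrite [RHS](bigID (@good_estimate _ _ rho m eps N)).
- apply: le_trans (pois_not_good_estimate_le _ _ _ _ _ K rhot_psd rhot_tr m0 lam_bd close) _.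
  exact: sample_size_chernoff_le.
Qed.
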